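(* Let $\sigma\subseteq N_\mathbb{Q}$ be a strongly convex rational polyhedral cone, $\tau$ a $k$-dimensional regular face with primitive ray generators $p_1,\ldots,p_k$, $\{e_1^{(r)},e_2^{(r)}\}_{r=1}^k$ a set of Demazure roots of $\sigma$ compatible with $\tau$, and $\gamma$ a face of $\sigma$. Suppose that for each $r$ with $p_r\notin\gamma$ at least one of $e_1^{(r)},e_2^{(r)}$ lies in $\gamma^\perp$. Then the cone generated by $\gamma$ and $\{p_r: p_r\notin\gamma\}$ is a face of $\sigma$.
   Context: $N$ lattice, $M$ dual, $\langle\cdot,\cdot\rangle$ pairing. Regular face: primitive ray generators extend to a basis of $N$. Demazure root for a ray generator $p_i$ of $\sigma$: $e\in M$ with $\langle p_i,e\rangle=-1$ and $\langle p_j,e\rangle\ge0$ for all other ray generators $p_j$ of $\sigma$. Compatibility with $\tau$: $\langle p_s,e_1^{(r)}\rangle=\langle p_s,e_2^{(r)}\rangle=-\delta_{rs}$ for $r,s=1,\ldots,k$. *)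

(* N = Z^n is realised inside N_Q = 'rV[rat]_n as the
   row vectors with integral entries; M_Q is identified with 'rV[rat]_n
   via the standard pairing. *)
From HB Require Import structures.
From mathcomp Require Import all_boot all_order all_algebra.
Set Implicit Arguments. Unset Strict Implicit. Unset Printing Implicit Defensive.
Import Order.TTheory GRing.Theory Num.Theory.
Local Open Scope ring_scope.

Notation vecQ n := 'rV[rat]_n.

Definition pairing n (p e : vecQ n) : rat := \sum_(i < n) p 0 i * e 0 i.

Definition isLattice n (v : vecQ n) : Prop := forall i, v 0 i \is a Num.int.

Definition isPrimitive n (v : vecQ n) : Prop :=
  isLattice v /\ v <> 0 /\
  forall (q : vecQ n) (m : nat), isLattice q -> v = m%:R *: q -> m = 1%N.

Definition conic_hull n (A : vecQ n -> Prop) : vecQ n -> Prop :=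
  fun x => exists (m : nat) (f : 'I_m -> vecQ n) (c : 'I_m -> rat),
    (forall i, A (f i)) /\ (forall i, 0 <= c i) /\ x = \sum_(i < m) c i *: f i.

Definition polycone n (gens : seq (vecQ n)) : vecQ n -> Prop :=
  conic_hull (fun v => v \in gens).

Definition strongly_convex n (s : vecQ n -> Prop) : Prop :=
  forall x, s x -> s (- x) -> x = 0.

Definition dual_cone n (s : vecQ n -> Prop) : vecQ n -> Prop :=
  fun u => forall x, s x -> 0 <= pairing x u.

Definition isFace n (s F : vecQ n -> Prop) : Prop :=
  exists u, dual_cone s u /\ forall x, F x <-> (s x /\ pairing x u = 0).

Definition perp n (g : vecQ n -> Prop) : vecQ n -> Prop :=
  fun e => forall x, g x -> pairing x e = 0.

Definition isRayGen n (s : vecQ n -> Prop) (p : vecQ n) : Prop :=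
  isPrimitive p /\ isFace s (conic_hull (fun v => v = p)).

Definition isDemazureRootAt n (s : vecQ n -> Prop) (p e : vecQ n) : Prop :=
  isRayGen s p /\ isLattice e /\ pairing p e = -1 /\
  forall q, isRayGen s q -> q <> p -> 0 <= pairing q e.

Definition isDemazureRoot n (s : vecQ n -> Prop) (e : vecQ n) : Prop :=
  exists p, isDemazureRootAt s p e.

Definition isLatticeBasis n (b : 'I_n -> vecQ n) : Prop :=
  (forall i, isLattice (b i)) /\
  (forall v, isLattice v -> exists c : 'I_n -> int, v = \sum_(i < n) (c i)%:~R *: b i) /\
  (forall c : 'I_n -> rat, \sum_(i < n) c i *: b i = 0 -> forall i, c i = 0).

Definition extendsToBasis n k (p : 'I_k -> vecQ n) : Prop :=
  exists (b : 'I_n -> vecQ n) (f : 'I_k -> 'I_n),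
    isLatticeBasis b /\ injective f /\ forall r, b (f r) = p r.

Definition isRegularFaceWithRays n k (s : vecQ n -> Prop) (p : 'I_k -> vecQ n) : Prop :=
  let tau := conic_hull (fun v => exists r, v = p r) in
  isFace s tau /\ injective p /\
  (forall r, isRayGen s (p r)) /\
  (forall q, isRayGen s q -> tau q -> exists r, q = p r) /\
  extendsToBasis p.

Definition compatible n k (p e1 e2 : 'I_k -> vecQ n) : Prop :=
  forall r s, pairing (p s) (e1 r) = - (r == s)%:R /\ pairing (p s) (e2 r) = - (r == s)%:R.

(* Write gamma = sigma ∩ u^⊥ with u in the dual cone, and for each r pick a root
   f_r among e_1^(r), e_2^(r), taking one in gamma^⊥ when p_r ∉ gamma.  Then
   w = u + Σ_r <p_r, u> f_r vanishes on every p_r by compatibility, and on gamma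
   because <p_r, u> = 0 when p_r ∈ gamma.  On any other primitive ray generator q
   we have <q, f_r> >= 0, as f_r is a Demazure root at p_r, so <q, w> >= <q, u> >= 0,
   with equality only if q ∈ gamma.  Since a strongly convex polyhedral cone is
   generated by its primitive ray generators (Farkas' lemma exposes each irredundant
   generator), w lies in the dual cone and sigma ∩ w^⊥ is the cone spanned by gamma
   and the p_r ∉ gamma. *)

From mathcomp Require Import all_boot all_order all_algebra.
From mathcomp Require Import ring lra zify.
From Stdlib Require Import Classical.
Set Implicit Arguments. Unset Strict Implicit. Unset Printing Implicit Defensive.
Import Order.TTheory GRing.Theory Num.Theory.
Local Open Scope ring_scope.

Section Pairing.
Variable n : nat.
Implicit Types x y e : vecQ n.

Lemma pairingC x y : pairing x y = pairing y x.
Proof. by apply: eq_bigr => i _; rewrite mulrC. Qed.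

Lemma pairingDl x y e : pairing (x + y) e = pairing x e + pairing y e.
Proof. by rewrite /pairing -big_split; apply: eq_bigr => i _; rewrite mxE mulrDl. Qed.

Lemma pairingZl (c : rat) x e : pairing (c *: x) e = c * pairing x e.
Proof. by rewrite /pairing mulr_sumr; apply: eq_bigr => i _; rewrite mxE mulrA. Qed.

Lemma pairingNl x e : pairing (- x) e = - pairing x e.
Proof. by rewrite -scaleN1r pairingZl mulN1r. Qed.

Lemma pairingBl x y e : pairing (x - y) e = pairing x e - pairing y e.
Proof. by rewrite pairingDl pairingNl. Qed.

Lemma pairing0l e : pairing 0 e = 0.
Proof. by rewrite -(scale0r 0) pairingZl mul0r. Qed.

Lemma pairingDr x y e : pairing e (x + y) = pairing e x + pairing e y.
Proof. by rewrite !(pairingC e) pairingDl. Qed.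

Lemma pairingZr (c : rat) x e : pairing e (c *: x) = c * pairing e x.
Proof. by rewrite !(pairingC e) pairingZl. Qed.

Lemma pairingNr x e : pairing e (- x) = - pairing e x.
Proof. by rewrite !(pairingC e) pairingNl. Qed.

Lemma pairingBr x y e : pairing e (x - y) = pairing e x - pairing e y.
Proof. by rewrite !(pairingC e) pairingBl. Qed.

Lemma pairing0r e : pairing e 0 = 0.
Proof. by rewrite pairingC pairing0l. Qed.

Lemma pairing_suml (I : Type) (r : seq I) (P : pred I) (F : I -> vecQ n) e :
  pairing (\sum_(i <- r | P i) F i) e = \sum_(i <- r | P i) pairing (F i) e.
Proof. by elim/big_rec2: _ => [|i a b _ <-]; rewrite ?pairing0l ?pairingDl. Qed.

Lemma pairing_sumr (I : Type) (r : seq I) (P : pred I) (F : I -> vecQ n) e :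
  pairing e (\sum_(i <- r | P i) F i) = \sum_(i <- r | P i) pairing e (F i).
Proof. by rewrite pairingC pairing_suml; apply: eq_bigr => i _; apply: pairingC. Qed.

Lemma pairing_delta x (i : 'I_n) : pairing x (delta_mx 0 i) = x 0 i.
Proof.
rewrite /pairing (bigD1 i) //= big1 => [|j ji]; first by rewrite !mxE !eqxx mulr1 addr0.
by rewrite !mxE eqxx /= (negbTE ji) mulr0.
Qed.

End Pairing.

Section SeqCone.
Variable n : nat.
Implicit Types (L : seq (vecQ n)) (x y g u v : vecQ n).

Fixpoint seq_cone L x : Prop :=
  if L is g :: L' then exists2 c, 0 <= c & seq_cone L' (x - c *: g) else x = 0.

Lemma seq_cone0 L : seq_cone L 0.
Proof. by elim: L => [|g L IH] //=; exists 0; rewrite ?scale0r ?subr0. Qed.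

Lemma seq_coneD L x y : seq_cone L x -> seq_cone L y -> seq_cone L (x + y).
Proof.
elim: L x y => [|g L IH] x y /=; first by move=> -> ->; rewrite addr0.
move=> [c1 c1ge0 Hx] [c2 c2ge0 Hy]; exists (c1 + c2); first exact: addr_ge0.
by rewrite scalerDl opprD addrACA; apply: IH.
Qed.

Lemma seq_coneZ L (c : rat) x : 0 <= c -> seq_cone L x -> seq_cone L (c *: x).
Proof.
elim: L x => [|g L IH] x c_ge0 /=; first by move=> ->; rewrite scaler0.
move=> [d d_ge0 Hx]; exists (c * d); first exact: mulr_ge0.
by rewrite -scalerA -scalerBr; apply: IH.
Qed.

Lemma seq_cone_cons L g x : seq_cone L x -> seq_cone (g :: L) x.
Proof. by move=> Hx /=; exists 0; rewrite ?scale0r ?subr0. Qed.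

Lemma seq_cone_mem L g : g \in L -> seq_cone L g.
Proof.
elim: L => [|h L IH]; rewrite ?in_nil // in_cons => /predU1P [->|/IH].
  by exists 1; rewrite ?ler01 // scale1r subrr; apply: seq_cone0.
exact: seq_cone_cons.
Qed.

Lemma seq_cone_trans L L' x :
  (forall v, v \in L -> seq_cone L' v) -> seq_cone L x -> seq_cone L' x.
Proof.
elim: L x => [|g L IH] x HL /=; first by move=> ->; apply: seq_cone0.
move=> [c c_ge0 Hx]; rewrite -(subrK (c *: g) x).
apply: seq_coneD; last by apply: seq_coneZ => //; apply: HL; rewrite mem_head.
by apply: IH => // v vL; apply: HL; rewrite in_cons vL orbT.
Qed.

Lemma seq_cone_pairing_ge0 L u x :
  (forall v, v \in L -> 0 <= pairing v u) -> seq_cone L x -> 0 <= pairing x u.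
Proof.
elim: L x => [|g L IH] x HL /=; first by move=> ->; rewrite pairing0l.
move=> [c c_ge0 Hx]; rewrite -(subrK (c *: g) x) pairingDl pairingZl.
apply: addr_ge0; last by apply: mulr_ge0 => //; apply: HL; rewrite mem_head.
by apply: IH => // v vL; apply: HL; rewrite in_cons vL orbT.
Qed.

Lemma seq_cone_face L u x :
  (forall v, v \in L -> 0 <= pairing v u) -> seq_cone L x -> pairing x u = 0 ->
  seq_cone [seq v <- L | pairing v u == 0] x.
Proof.
elim: L x => [|g L IH] x HL //= [c c_ge0 Hx] xu0.
have HL' v : v \in L -> 0 <= pairing v u by move=> vL; apply: HL; rewrite in_cons vL orbT.
have gu_ge0 : 0 <= pairing g u by apply: HL; rewrite mem_head.
have := seq_cone_pairing_ge0 HL' Hx; rewrite pairingBl pairingZl xu0 sub0r oppr_ge0.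
move=> cgu_le0; have cgu0 : c * pairing g u = 0 by apply/eqP; rewrite eq_le cgu_le0 mulr_ge0.
have [gu0|gu_neq0] /= := eqVneq (pairing g u) 0.
  by exists c => //; apply: IH; rewrite // pairingBl pairingZl xu0 gu0 mulr0 subr0.
have c0 : c = 0 by move/eqP: cgu0; rewrite mulf_eq0 (negbTE gu_neq0) orbF => /eqP.
by apply: IH => //; move: Hx; rewrite c0 scale0r subr0.
Qed.

Lemma seq_cone_split L g z : seq_cone L z ->
  exists2 d, 0 <= d & seq_cone [seq v <- L | v != g] (z - d *: g).
Proof.
elim: L z => [|h L IH] z /=; first by move=> ->; exists 0; rewrite ?scale0r ?subr0.
move=> [c c_ge0 /IH [d d_ge0 Hd]].
have [hg|hg] /= := eqVneq h g.
  by rewrite hg in Hd; exists (c + d); [apply: addr_ge0 | rewrite scalerDl opprD addrA].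
by exists d => //; exists c => //; rewrite addrAC.
Qed.

End SeqCone.

Section ConicHull.
Variable n : nat.
Implicit Types (A : vecQ n -> Prop) (L : seq (vecQ n)) (x g q : vecQ n).

Lemma conic_hull0 A : conic_hull A 0.
Proof. by exists 0%N, (fun=> 0), (fun=> 0); split; [case | split; rewrite ?big_ord0]. Qed.

Lemma conic_hullDZ A g (c : rat) x :
  A g -> 0 <= c -> conic_hull A x -> conic_hull A (c *: g + x).
Proof.
move=> Ag c_ge0 [m [f [d [Af [d_ge0 ->]]]]].
exists m.+1, (fun i => if unlift ord0 i is Some j then f j else g),
  (fun i => if unlift ord0 i is Some j then d j else c).
split; first by move=> i; case: (unlift ord0 i).
split; first by move=> i; case: (unlift ord0 i).
by rewrite big_ord_recl unlift_none; congr (_ + _); apply: eq_bigr => i _; rewrite liftK.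
Qed.

Lemma conic_hull_seq_cone A L x :
  (forall v, v \in L -> A v) -> seq_cone L x -> conic_hull A x.
Proof.
elim: L x => [|g L IH] x AL /=; first by move=> ->; apply: conic_hull0.
move=> [c c_ge0 Hx]; rewrite -(addrNK (c *: g) x) addrC.
apply: conic_hullDZ => //; first by apply: AL; rewrite mem_head.
by apply: IH => // v vL; apply: AL; rewrite in_cons vL orbT.
Qed.

Lemma seq_cone_conic_hull A L x :
  (forall v, A v -> seq_cone L v) -> conic_hull A x -> seq_cone L x.
Proof.
move=> AL [m [f [c [Af [c_ge0 ->]]]]].
apply: (big_ind (seq_cone L)); [exact: seq_cone0 | exact: seq_coneD |].
by move=> i _; apply: seq_coneZ => //; apply: AL.
Qed.

Lemma polyconeP L x : polycone L x <-> seq_cone L x.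
Proof.
split; first by apply: seq_cone_conic_hull => v; apply: seq_cone_mem.
by apply: conic_hull_seq_cone.
Qed.

Lemma conic_hull1P q x : conic_hull (eq^~ q) x <-> exists2 d, 0 <= d & x = d *: q.
Proof.
split=> [[m [f [c [fq [c_ge0 ->]]]]] | [d d_ge0 ->]].
  exists (\sum_(i < m) c i); first exact: sumr_ge0.
  by rewrite scaler_suml; apply: eq_bigr => i _; rewrite fq.
by rewrite -[d *: q]addr0; apply: conic_hullDZ => //; apply: conic_hull0.
Qed.

Lemma rayGen_mem s q : isRayGen s q -> s q.
Proof.
move=> [_ [u [_ faceE]]]; suff /faceE [] : conic_hull (eq^~ q) q by [].
by apply/conic_hull1P; exists 1; rewrite ?ler01 ?scale1r.
Qed.

End ConicHull.

Section Farkas.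
Variable n : nat.
Implicit Types (A : seq (vecQ n)) (a b x y : vecQ n).

Lemma seq_cone_shift a (t : vecQ n -> rat) A y (s : rat) :
  (forall v, v \in A -> t v <= 0) -> 0 <= s ->
  seq_cone [seq v - t v *: a | v <- A] y -> seq_cone (a :: A) (y + s *: a).
Proof.
elim: A y s => [|v A IH] y s tA s_ge0 /=.
  by move=> ->; exists s; rewrite // add0r subrr.
move=> [c c_ge0 Hy].
have tA' w : w \in A -> t w <= 0 by move=> wA; apply: tA; rewrite in_cons wA orbT.
have ctv_le0 : c * t v <= 0 by apply: mulr_ge0_le0 => //; apply: tA; rewrite mem_head.
have [|d d_ge0 Hd] := IH _ (s - c * t v) tA' _ Hy.
  by rewrite subr_ge0 (le_trans ctv_le0).
exists d => //; exists c => //.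
suff -> : y + s *: a - d *: a - c *: v =
    y - c *: (v - t v *: a) + (s - c * t v) *: a - d *: a by [].
by apply/rowP => i; rewrite !mxE; ring.
Qed.

(* Fourier-Motzkin: a separating [x0] lets us eliminate the first generator [a]. *)
Lemma farkas A b :
  (forall x, (forall a, a \in A -> 0 <= pairing a x) -> 0 <= pairing b x) -> seq_cone A b.
Proof.
move: {2}(size A) (erefl (size A)) => m; elim: m A b => [|m IH] [|a A] b //= sizeA Hb.
  apply/rowP => i; rewrite mxE.
  have nil0 x a : a \in [::] -> 0 <= pairing a x by rewrite in_nil.
  have := Hb _ (nil0 (delta_mx 0 i)); have := Hb _ (nil0 (- delta_mx 0 i)).
  by rewrite pairingNr !pairing_delta; lra.
case: sizeA => {}sizeA.
have [HA|] := classic (forall x, (forall v, v \in A -> 0 <= pairing v x) -> 0 <= pairing b x).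
  by apply: seq_cone_cons; apply: IH.
move=> /not_all_ex_not [x0 notHx0]; have [x0A /negP] := imply_to_and _ _ notHx0.
rewrite -ltNge => bx0_lt0.
set al := pairing a x0.
have al_lt0 : al < 0.
  rewrite ltNge; apply/negP => al_ge0; move: bx0_lt0; rewrite ltNge Hb // => v.
  by rewrite in_cons => /predU1P [->|/x0A].
pose t v := pairing v x0 / al.
have tA v : v \in A -> t v <= 0.
  by move=> vA; apply: mulr_ge0_le0; [apply: x0A | rewrite invr_le0 ltW].
have tb_ge0 : 0 <= t b by apply: ltW; rewrite /t nmulr_rgt0 // invr_lt0.
have : seq_cone [seq v - t v *: a | v <- A] (b - t b *: a).
  apply: IH; first by rewrite size_map.
  move=> x HAx; pose x' := x - (pairing a x / al) *: x0.
  have tE v : pairing (v - t v *: a) x = pairing v x'.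
    by rewrite /x' /t pairingBl pairingBr pairingZl pairingZr -/al; ring.
  rewrite tE; apply: Hb => v; rewrite in_cons => /predU1P [->|vA].
    by rewrite pairingBr pairingZr -/al divfK ?subrr // lt_eqF.
  by rewrite -tE; apply: HAx; apply: map_f.
by move/(seq_cone_shift tA tb_ge0); rewrite subrK.
Qed.

End Farkas.

Section Primitive.
Variable n : nat.
Implicit Types g q w : vecQ n.

Lemma lattice_pos_multiple g : exists2 w, isLattice w & exists2 c, 0 < c & g = c *: w.
Proof.
pose D : rat := \prod_(j < n) (denq (g 0 j))%:~R.
have D_gt0 : 0 < D by apply: prodr_gt0 => j _; rewrite ltr0z denq_gt0.
exists (D *: g); last by exists D^-1; rewrite ?invr_gt0 // scalerA mulVf ?scale1r ?gt_eqF.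
move=> i; rewrite mxE /D (bigD1 i) //= mulrC mulrA.
have -> : g 0 i * (denq (g 0 i))%:~R = (numq (g 0 i))%:~R.
  by rewrite -{1}(divq_num_den (g 0 i)) divfK // intr_eq0 denq_neq0.
by rewrite rpredM ?rpred_prod // => *; apply: intr_int.
Qed.

(* Descent on the absolute value of a fixed nonzero coordinate. *)
Lemma primitive_pos_multiple g :
  g != 0 -> exists2 q, isPrimitive q & exists2 c, 0 < c & g = c *: q.
Proof.
move=> g_neq0; have [i0 gi0] : exists i0, g 0 i0 != 0.
  apply/existsP; apply: contraNT g_neq0 => /existsPn g0; apply/eqP/rowP => i.
  by rewrite mxE; apply/eqP; move: (g0 i); rewrite negbK.
have normE w : isLattice w -> `|w 0 i0| = (Num.truncn `|w 0 i0|)%:R.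
  by move=> wL; rewrite truncnK // natr_norm_int.
suff: forall k w, isLattice w -> (exists2 c, 0 < c & g = c *: w) -> `|w 0 i0| = k%:R ->
    exists2 q, isPrimitive q & exists2 c, 0 < c & g = c *: q.
  by have [w wL gw] := lattice_pos_multiple g; apply; [apply: wL | apply: gw | apply: normE].
elim/ltn_ind => k IH w wL [c c_gt0 gE] wk.
have wi0 : w 0 i0 != 0 by move: gi0; rewrite gE mxE mulf_eq0 negb_or => /andP [].
have [w_prim|w_nprim] := classic (isPrimitive w); first by exists w => //; exists c.
have [q [m [qL wE m_neq1]]] : exists q (m : nat), [/\ isLattice q, w = m%:R *: q & m <> 1%N].
  apply: NNPP => nodiv; apply: w_nprim; split=> //; split=> [w0|q m qL wE].
    by move: wi0; rewrite w0 mxE eqxx.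
  by apply: NNPP => m_neq1; apply: nodiv; exists q, m.
have m_neq0 : m <> 0%N by move=> m0; move: wi0; rewrite wE m0 scale0r mxE eqxx.
have qi0 : q 0 i0 != 0 by move: wi0; rewrite wE mxE mulf_eq0 negb_or => /andP [].
pose k' := Num.truncn `|q 0 i0|.
have kE : k = (m * k')%N.
  by apply/eqP; rewrite -(eqr_nat rat) -wk wE mxE normrM normr_nat natrM -(normE q).
have k'_gt0 : (0 < k')%N by rewrite -(ltr0n rat) -(normE q) // normr_gt0.
apply: (IH k' _ q qL); [by rewrite kE; nia | | exact: normE].
by exists (c * m%:R); [rewrite mulr_gt0 // ltr0n; lia | rewrite gE wE scalerA].
Qed.

End Primitive.

Section Rays.
Variable n : nat.
Implicit Types (L : seq (vecQ n)) (x g h u v q : vecQ n).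

Definition irredundant L := forall g, g \in L -> ~ seq_cone [seq v <- L | v != g] g.

Lemma irredundant_neq0 L v : irredundant L -> v \in L -> v != 0.
Proof.
by move=> irrL vL; apply/eqP => v0; apply: (irrL v vL); rewrite v0; apply: seq_cone0.
Qed.

Lemma irredundant_generators L :
  exists2 L', irredundant L' & forall x, seq_cone L x <-> seq_cone L' x.
Proof.
move: {2}(size L) (leqnn (size L)) => m; elim: m L => [|m IH] L sizeL.
  by exists L => // g; move: sizeL; rewrite leqn0 => /nilP ->.
have [irrL|/not_all_ex_not [g notg]] := classic (irredundant L); first by exists L.
have [gL /NNPP redg] := imply_to_and _ _ notg.
have [|L' irrL' L'E] := IH [seq v <- L | v != g].
  rewrite -ltnS (leq_trans _ sizeL) // size_filter -(count_predC (pred1 g) L) addnC.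
  by rewrite -{1}[count _ _]addn0 ltn_add2l -has_count has_pred1.
exists L' => // x; rewrite -L'E; split; apply: seq_cone_trans => v.
  by have [-> //|vg vL] := eqVneq v g; apply: seq_cone_mem; rewrite mem_filter vg.
by rewrite mem_filter => /andP [_ vL]; apply: seq_cone_mem.
Qed.

Section Exposure.
Variable L : seq (vecQ n).
Hypothesis L_pointed : forall x, seq_cone L x -> seq_cone L (- x) -> x = 0.
Hypothesis L_irr : irredundant L.
Variable g : vecQ n.
Hypothesis gL : g \in L.

(* Otherwise [- h + mu g] lies in the cone of [L \ g]: for [mu > 0] this puts [g] there,
   for [mu <= 0] it puts [- h] in the cone of [L]. *)
Lemma opp_notin_cone_line h : h \in L -> h != g -> ~ seq_cone (g :: - g :: L) (- h).
Proof.
move=> hL hg /= [c1 c1_ge0 [c2 c2_ge0 /(seq_cone_split g) [d d_ge0]]].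
set M := [seq v <- L | v != g]; set mu := c2 - c1 - d.
have -> : - h - c1 *: g - c2 *: - g - d *: g = - h + mu *: g.
  by apply/rowP => i; rewrite !mxE /mu; ring.
move=> Hz; have hM : h \in M by rewrite mem_filter hg.
have [mu_gt0|mu_le0] := ltrP 0 mu.
  have gE : g = mu^-1 *: (h + (- h + mu *: g)).
    by rewrite addNKr scalerA mulVf ?scale1r // gt_eqF.
  apply: (L_irr gL); rewrite [X in seq_cone _ X]gE.
  by apply: seq_coneZ; [rewrite invr_ge0 ltW | apply: seq_coneD => //; apply: seq_cone_mem].
have ML v : v \in M -> seq_cone L v by rewrite mem_filter => /andP [_ /seq_cone_mem].
have /eqP := irredundant_neq0 L_irr hL; apply; apply: L_pointed; first exact: seq_cone_mem.
rewrite -(addrK (mu *: g) (- h)); apply: seq_coneD; first exact: seq_cone_trans ML Hz.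
by rewrite -scaleNr; apply: seq_coneZ; [rewrite oppr_ge0 | apply: seq_cone_mem].
Qed.

Lemma exposing_functional h : h \in L -> h != g ->
  exists u, [/\ pairing g u = 0, forall v, v \in L -> 0 <= pairing v u & 0 < pairing h u].
Proof.
move=> hL hg.
have [Hfar|] := classic
  (forall x, (forall a, a \in g :: - g :: L -> 0 <= pairing a x) -> 0 <= pairing (- h) x).
  by case: (opp_notin_cone_line hL hg); apply: farkas.
move=> /not_all_ex_not [u notHu]; have [Lu /negP] := imply_to_and _ _ notHu.
rewrite pairingNl oppr_ge0 -ltNge => hu_gt0; exists u; split=> // [|v vL].
  have := Lu g (mem_head _ _); have := Lu (- g).
  by rewrite pairingNl in_cons mem_head orbT => /(_ isT); lra.
by apply: Lu; rewrite !in_cons vL !orbT.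
Qed.

Lemma irredundant_exposed : exists u, [/\ pairing g u = 0,
  forall v, v \in L -> 0 <= pairing v u & forall v, v \in L -> v != g -> 0 < pairing v u].
Proof.
suff /(_ [seq v <- L | v != g] (fun _ => id)) [u [gu Lu Su]] : forall S : seq (vecQ n),
    {subset S <= [seq v <- L | v != g]} -> exists u, [/\ pairing g u = 0,
      forall v, v \in L -> 0 <= pairing v u & forall v, v \in S -> 0 < pairing v u].
  by exists u; split=> // v vL vg; apply: Su; rewrite mem_filter vg.
elim=> [|h S IH] SM.
  by exists 0; split=> [|v _|v]; rewrite ?pairing0r ?in_nil.
have /SM := mem_head h S; rewrite mem_filter => /andP [hg hL].
have [u1 [gu1 Lu1 hu1]] := exposing_functional hL hg.
have [|u2 [gu2 Lu2 Su2]] := IH; first by move=> v vS; apply: SM; rewrite in_cons vS orbT.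
exists (u1 + u2); split=> [|v vL|v]; rewrite ?pairingDr ?gu1 ?gu2 ?addr0 //.
  by rewrite addr_ge0 ?Lu1 ?Lu2.
rewrite in_cons => /predU1P [->|vS]; first by have := Lu2 h hL; lra.
have /SM : v \in h :: S by rewrite in_cons vS orbT.
rewrite mem_filter => /andP [_ vL]; have := Su2 v vS; have := Lu1 v vL; lra.
Qed.

End Exposure.

Lemma irredundant_rayGen gens L g :
  strongly_convex (polycone gens) -> (forall x, polycone gens x <-> seq_cone L x) ->
  irredundant L -> g \in L ->
  exists2 q, isRayGen (polycone gens) q & exists2 c, 0 < c & g = c *: q.
Proof.
move=> sc coneE irrL gL.
have pointed x : seq_cone L x -> seq_cone L (- x) -> x = 0 by rewrite -!coneE; apply: sc.
have [u [gu0 Lu Lu_gt0]] := irredundant_exposed pointed irrL gL.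
have [q q_prim [c c_gt0 gE]] := primitive_pos_multiple (irredundant_neq0 irrL gL).
have qu0 : pairing q u = 0.
  by move/eqP: gu0; rewrite gE pairingZl mulf_eq0 gt_eqF //= => /eqP.
exists q; last by exists c.
split=> //; exists u; split=> [x /coneE|y]; first exact: seq_cone_pairing_ge0.
split=> [/conic_hull1P [d d_ge0 ->]|[/coneE Hy yu0]].
  rewrite pairingZl qu0 mulr0; split=> //; apply/coneE.
  rewrite -[q](scalerK (lt0r_neq0 c_gt0)) -gE scalerA.
  by apply: seq_coneZ; [apply: divr_ge0 => //; apply: ltW | apply: seq_cone_mem].
have: conic_hull (eq^~ g) y.
  apply: conic_hull_seq_cone (seq_cone_face Lu Hy yu0) => v.
  rewrite mem_filter => /andP [/eqP vu0 vL]; apply/eqP; apply: contraT => vg.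
  by move: (Lu_gt0 v vL vg); rewrite vu0 ltxx.
move/conic_hull1P => [d d_ge0 ->]; apply/conic_hull1P.
by exists (d * c); [apply: mulr_ge0 => //; apply: ltW | rewrite gE scalerA].
Qed.

Lemma seq_cone_choice (P : vecQ n -> Prop) L :
  (forall g, g \in L -> exists2 q, P q & exists2 c, 0 < c & g = c *: q) ->
  exists2 Q, (forall q, q \in Q -> P q) & forall g, g \in L -> seq_cone Q g.
Proof.
elim: L => [|g L IH] HL; first by exists [::].
have [|Q PQ LQ] := IH; first by move=> h hL; apply: HL; rewrite in_cons hL orbT.
have [q Pq [c c_gt0 gE]] := HL g (mem_head _ _).
exists (q :: Q) => [q'|h]; first by rewrite in_cons => /predU1P [->|/PQ].
rewrite in_cons => /predU1P [->|/LQ]; last exact: seq_cone_cons.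
by rewrite gE; apply: seq_coneZ; [apply: ltW | apply: seq_cone_mem; rewrite mem_head].
Qed.

Theorem polycone_rayGen_spanned gens : strongly_convex (polycone gens) ->
  exists2 Q, (forall q, q \in Q -> isRayGen (polycone gens) q) &
    forall x, polycone gens x -> seq_cone Q x.
Proof.
move=> sc; have [L irrL LE] := irredundant_generators gens.
have coneE x : polycone gens x <-> seq_cone L x := iff_trans (polyconeP gens x) (LE x).
have [Q rayQ LQ] := seq_cone_choice (fun g => irredundant_rayGen (g := g) sc coneE irrL).
by exists Q => // x /coneE; apply: seq_cone_trans.
Qed.

End Rays.

Lemma demazure_root_ge0 n (s : vecQ n -> Prop) (e p q : vecQ n) :
  isDemazureRoot s e -> isRayGen s p -> pairing p e < 0 ->
  isRayGen s q -> q <> p -> 0 <= pairing q e.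
Proof.
move=> [p' [_ [_ [_ rootE]]]] rayp pe_lt0 rayq qp.
have pp' : p = p' by apply: NNPP => p_neq_p'; move: pe_lt0; rewrite ltNge rootE.
by apply: rootE; rewrite // -pp'.
Qed.

Lemma face_of_ray_kernel n (gens : seq (vecQ n)) (w : vecQ n) (A : vecQ n -> Prop) :
  strongly_convex (polycone gens) ->
  (forall q, isRayGen (polycone gens) q -> 0 <= pairing q w) ->
  (forall v, A v -> polycone gens v /\ pairing v w = 0) ->
  (forall q, isRayGen (polycone gens) q -> pairing q w = 0 -> A q) ->
  isFace (polycone gens) (conic_hull A).
Proof.
move=> sc ray_ge0 A_ker ker_A; have [Q rayQ sigmaQ] := polycone_rayGen_spanned sc.
have Qw v : v \in Q -> 0 <= pairing v w by move=> /rayQ; apply: ray_ge0.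
exists w; split=> [x /sigmaQ|x]; first exact: seq_cone_pairing_ge0.
split=> [Ax|[/sigmaQ Qx xw0]].
  split; first by apply/polyconeP; apply: seq_cone_conic_hull Ax => v /A_ker [/polyconeP].
  have [m [f [c [Af [_ ->]]]]] := Ax.
  by rewrite pairing_suml big1 // => i _; rewrite pairingZl (A_ker _ (Af i)).2 mulr0.
apply: conic_hull_seq_cone (seq_cone_face Qw Qx xw0) => v.
by rewrite mem_filter => /andP [/eqP vw0 /rayQ rayv]; apply: ker_A.
Qed.

Section CompatibleRoots.
Variables (n k : nat) (gens : seq (vecQ n)) (p f : 'I_k -> vecQ n).
Variables (gamma : vecQ n -> Prop) (u : vecQ n).
Hypothesis gammaE : forall x, gamma x <-> polycone gens x /\ pairing x u = 0.
Hypothesis u_dual : dual_cone (polycone gens) u.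
Hypothesis p_ray : forall r, isRayGen (polycone gens) (p r).
Hypothesis f_compat : forall r s, pairing (p s) (f r) = - (r == s)%:R.
Hypothesis f_root : forall r q, isRayGen (polycone gens) q -> q <> p r -> 0 <= pairing q (f r).
Hypothesis f_perp : forall r, ~ gamma (p r) -> perp gamma (f r).

Let w := u + \sum_(r < k) pairing (p r) u *: f r.

Lemma pairing_w x : pairing x w = pairing x u + \sum_(r < k) pairing (p r) u * pairing x (f r).
Proof.
by rewrite pairingDr pairing_sumr; congr (_ + _); apply: eq_bigr => r _; rewrite pairingZr.
Qed.

Lemma pairing_w_p s : pairing (p s) w = 0.
Proof.
rewrite pairing_w (bigD1 s) //= big1 => [|r rs]; last by rewrite f_compat (negbTE rs) mulr0.
by rewrite f_compat eqxx addr0 mulrN1 subrr.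
Qed.

(* [<p_r, u> = 0] whenever [p_r] lies in [gamma], and [f_r] kills [gamma] otherwise. *)
Lemma pairing_w_gamma x : gamma x -> pairing x w = 0.
Proof.
move=> gx; rewrite pairing_w ((gammaE x).1 gx).2 add0r big1 // => r _.
have [gr|ngr] := classic (gamma (p r)); first by rewrite ((gammaE _).1 gr).2 mul0r.
by rewrite f_perp ?mulr0.
Qed.

Lemma pairing_w_ray q : isRayGen (polycone gens) q -> (forall s, q <> p s) ->
  pairing q u <= pairing q w.
Proof.
move=> rayq qp; rewrite pairing_w lerDl; apply: sumr_ge0 => r _.
by apply: mulr_ge0; [apply: u_dual; apply: rayGen_mem | apply: f_root].
Qed.

Lemma face_gamma_compatible_rays : strongly_convex (polycone gens) ->
  isFace (polycone gens) (conic_hull (fun x => gamma x \/ exists r, ~ gamma (p r) /\ x = p r)).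
Proof.
move=> sc; apply: (face_of_ray_kernel (w := w)) => // [q rayq|v|q rayq].
- have [[s ->]|qp] := classic (exists s, q = p s); first by rewrite pairing_w_p.
  apply: le_trans (pairing_w_ray rayq _); first by apply: u_dual; apply: rayGen_mem.
  by move=> s qs; apply: qp; exists s.
- move=> [gv|[r [_ ->]]]; last by split; [apply: rayGen_mem | apply: pairing_w_p].
  by split; [apply: ((gammaE v).1 gv).1 | apply: pairing_w_gamma].
have [[s ->] _|qp qw0] := classic (exists s, q = p s).
  by have [gs|ngs] := classic (gamma (p s)); [left | right; exists s].
left; apply/gammaE; split; first exact: rayGen_mem.
have := pairing_w_ray rayq (fun s qs => qp (ex_intro _ s qs)).
have : 0 <= pairing q u by apply: u_dual; apply: rayGen_mem.
by rewrite qw0; lra.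
Qed.

End CompatibleRoots.

Theorem mainTheorem10 (n k : nat) (gens : seq 'rV[rat]_n)
  (p e1 e2 : 'I_k -> 'rV[rat]_n) (gamma : 'rV[rat]_n -> Prop) :
  strongly_convex (polycone gens) ->
  isRegularFaceWithRays (polycone gens) p ->
  (forall r, isDemazureRoot (polycone gens) (e1 r)) ->
  (forall r, isDemazureRoot (polycone gens) (e2 r)) ->
  compatible p e1 e2 ->
  isFace (polycone gens) gamma ->
  (forall r, ~ gamma (p r) -> perp gamma (e1 r) \/ perp gamma (e2 r)) ->
  isFace (polycone gens)
    (conic_hull (fun x => gamma x \/ exists r, ~ gamma (p r) /\ x = p r)).
Proof.
move=> sc [_ [_ [p_ray _]]] e1_root e2_root compat [u [u_dual gammaE]] e_perp.
pose good r (g : vecQ n) := (g = e1 r \/ g = e2 r) /\ (~ gamma (p r) -> perp gamma g).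
have [f f_spec] : exists f, forall r, good r (f r).
  apply: fin_all_exists => r.
  have [gr|ngr] := classic (gamma (p r)).
    by exists (e1 r); split=> [|/(_ gr)]; [left|].
  by case: (e_perp r ngr) => perp_e; [exists (e1 r) | exists (e2 r)]; split; auto.
have f_compat r s : pairing (p s) (f r) = - (r == s)%:R.
  by have [[->|->] _] := f_spec r; have [] := compat r s.
have f_root r q : isRayGen (polycone gens) q -> q <> p r -> 0 <= pairing q (f r).
  apply: (demazure_root_ge0 _ (p_ray r)); last by rewrite f_compat eqxx oppr_lt0 ltr01.
  by have [[->|->] _] := f_spec r; [apply: e1_root | apply: e2_root].
apply: (face_gamma_compatible_rays gammaE u_dual p_ray f_compat f_root) => // r.
exact: (f_spec r).2.
Qed.
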